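(* Let $\mathcal{P}$ be a partition of $\mathbb{R}$. Suppose there exists $D\in(0,\infty)$ that is a strict pairwise bound for every $X\in\mathcal{P}$, and let $\epsilon\in(0,\infty)$ be such that $|\mathcal{N}_{\epsilon}(p)|\leq 2$ for all $p\in\mathbb{R}$. Then $\epsilon\leq\frac{D}{2}$.
   Context: $D$ is a strict pairwise bound for $X\subseteq\mathbb{R}$ if $|x-y|<D$ for all $x,y\in X$. $\mathcal{N}_{\epsilon}(p)=\{X\in\mathcal{P}: X\cap[p-\epsilon,p+\epsilon]\neq\emptyset\}$. *)

From Stdlib Require Import Reals.
Open Scope R_scope.

Definition is_partition (P : (R -> Prop) -> Prop) : Prop :=
  (forall X, P X -> exists x, X x) /\
  (forall X Y, P X -> P Y -> X <> Y -> forall x, X x -> Y x -> False) /\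
  (forall x : R, exists X, P X /\ X x).

Definition strict_pairwise_bound (D : R) (X : R -> Prop) : Prop :=
  forall x y, X x -> X y -> Rabs (x - y) < D.

Definition N_eps (P : (R -> Prop) -> Prop) (eps p : R) (X : R -> Prop) : Prop :=
  P X /\ exists x, X x /\ p - eps <= x <= p + eps.

Definition card_le2 (F : (R -> Prop) -> Prop) : Prop :=
  forall X Y Z, F X -> F Y -> F Z -> X = Y \/ X = Z \/ Y = Z.

(* Suppose eps > D/2 and put h = eps - D/2. For x in a part X, the point x + D lies in a
   different part Y, since no part has diameter D. The window of radius eps around x + D/2
   contains x, x + D and x - h, so x - h lies in X or in Y; it cannot lie in Y, being at
   distance D + h from x + D. Hence every part is closed under x |-> x - h, so it contains
   points at distance n h from each other for every n, contradicting the bound D. *)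

From Stdlib Require Import Reals Lra.
Open Scope R_scope.

Lemma strict_pairwise_bound_shift_closed_empty (A : R -> Prop) (D h : R) :
  0 < h -> strict_pairwise_bound D A -> (forall x, A x -> A (x - h)) ->
  forall x, ~ A x.
Proof.
  intros Hh HA Hshift x Ax.
  assert (Aiter : forall n, A (x - INR n * h)).
  { induction n as [|n IH].
    - replace (x - INR 0 * h) with x by (simpl; ring); exact Ax.
    - replace (x - INR (S n) * h) with (x - INR n * h - h) by (rewrite S_INR; ring).
      exact (Hshift _ IH). }
  destruct (INR_archimed h D Hh) as [n Hn].
  pose proof (HA _ _ Ax (Aiter n)) as Hlt.
  replace (x - (x - INR n * h)) with (INR n * h) in Hlt by ring.
  rewrite Rabs_pos_eq in Hlt by (apply Rmult_le_pos; [apply pos_INR | lra]).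
  lra.
Qed.

Section LargeRadius.

Variables (P : (R -> Prop) -> Prop) (D eps : R).
Hypothesis P_cover : forall x, exists X, P X /\ X x.
Hypothesis P_bound : forall X, P X -> strict_pairwise_bound D X.
Hypothesis N_eps_le2 : forall p, card_le2 (N_eps P eps p).
Hypothesis D_pos : 0 < D.
Hypothesis eps_gt : D / 2 < eps.

Lemma N_eps_intro (p x : R) (X : R -> Prop) :
  P X -> X x -> p - eps <= x <= p + eps -> N_eps P eps p X.
Proof. intros PX Xx Hx; split; [exact PX | exists x; auto]. Qed.

Lemma part_shift_closed (X : R -> Prop) (x : R) :
  P X -> X x -> X (x - (eps - D / 2)).
Proof.
  intros PX Xx.
  destruct (P_cover (x + D)) as [Y [PY Yx]].
  destruct (P_cover (x - (eps - D / 2))) as [Z [PZ Zx]].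
  assert (NX : N_eps P eps (x + D / 2) X) by (apply (N_eps_intro _ x); auto; lra).
  assert (NY : N_eps P eps (x + D / 2) Y) by (apply (N_eps_intro _ (x + D)); auto; lra).
  assert (NZ : N_eps P eps (x + D / 2) Z) by (apply (N_eps_intro _ (x - (eps - D / 2))); auto; lra).
  destruct (N_eps_le2 _ _ _ _ NX NY NZ) as [<- | [<- | <-]].
  - pose proof (P_bound X PX _ _ Xx Yx) as Hlt.
    rewrite Rabs_left in Hlt; lra.
  - exact Zx.
  - pose proof (P_bound Y PY _ _ Yx Zx) as Hlt.
    rewrite Rabs_pos_eq in Hlt; lra.
Qed.

End LargeRadius.

Theorem mainTheorem19 (P : (R -> Prop) -> Prop) (D eps : R) :
  is_partition P ->
  0 < D ->
  (forall X, P X -> strict_pairwise_bound D X) ->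
  0 < eps ->
  (forall p : R, card_le2 (N_eps P eps p)) ->
  eps <= D / 2.
Proof.
  intros [_ [_ Hcov]] HD Hb _ Hc.
  apply Rnot_lt_le; intro Heps.
  destruct (Hcov 0) as [X [PX X0]].
  apply (strict_pairwise_bound_shift_closed_empty X D (eps - D / 2)) with 0.
  - lra.
  - exact (Hb X PX).
  - intros x; exact (part_shift_closed P D eps Hcov Hb Hc HD Heps X x PX).
  - exact X0.
Qed.
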